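(* Let $u:\mathbb{R}\times\mathbb{R}\to\mathbb{R}$ be a solution of the one-dimensional cubic nonlinear wave equation $$u_{tt}-u_{xx}+u^{3}=0,\qquad u(0,x)=u_0(x),\quad u_t(0,x)=u_1(x),$$ where $u_0\in C^1(\mathbb{R})$ with $u_0$ and $\partial_x u_0$ bounded on $\mathbb{R}$, and $u_1\in C^0(\mathbb{R})$ is bounded on $\mathbb{R}$. Then there is a constant $C$ (depending on $\|u_0\|_{L^\infty}$, $\|\partial_x u_0\|_{L^\infty}$, $\|u_1\|_{L^\infty}$) such that for all $t\ge 1$ and all $x\in\mathbb{R}$, $$|u(t,x)|\le C\,t^{1/3}.$$
   Context: The equation is the defocusing cubic wave equation on the real line with real-valued data that are uniformly $C^1\times C^0$, i.e. $\|u_0\|_{L^\infty}+\|\partial_x u_0\|_{L^\infty}+\|u_1\|_{L^\infty}<\infty$. *)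

From Stdlib Require Import Reals.
From Coquelicot Require Import Coquelicot.
Open Scope R_scope.

Definition is_C1 (f : R -> R) : Prop :=
  forall x, ex_derive f x /\ continuous (Derive f) x.

Definition jointly_continuous (u : R -> R -> R) : Prop :=
  forall t x, continuous (fun p : R * R => u (fst p) (snd p)) (t, x).

(* Solution of u_tt - u_xx + u^3 = 0, u(0)=u0, u_t(0)=u1, in the standard
   (mild / Duhamel) sense appropriate for C^1 x C^0 data in one dimension:
   u is continuous on R x R and for every (t,x),
   u(t,x) = (u0(x+t)+u0(x-t))/2 + 1/2 int_{x-t}^{x+t} u1
            - 1/2 int_0^t int_{x-(t-s)}^{x+(t-s)} u(s,y)^3 dy ds
   (oriented integrals; this is the d'Alembert-Duhamel formula, valid for
   all t in R). *)
Definition is_solution_NLW3 (u0 u1 : R -> R) (u : R -> R -> R) : Prop :=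
  jointly_continuous u /\
  forall t x,
    u t x = (u0 (x + t) + u0 (x - t)) / 2
            + / 2 * RInt u1 (x - t) (x + t)
            - / 2 * RInt (fun s => RInt (fun y => (u s y) ^ 3)
                                        (x - (t - s)) (x + (t - s))) 0 t.

(* In the characteristic coordinates [a = x + t], [b = x - t], the solution [W(a, b) = u(t, x)]
   and [P = (d_t + d_x) u] satisfy [d_a W = P / 2] and [d_b P = W^3 / 2], so the form
   [P^2 da + W^4/2 db] is closed ([d_b (P^2) = P W^3 = d_a (W^4 / 2)]). Integrating it around
   characteristic triangles bounds, in terms of the data, the fluxes of [P^2] and of [W^4]
   through characteristic segments of length [L] by [O(L)]; the mirror symmetry [x |-> -x]
   exchanges the two families of characteristics. Along the segment [b = x - t] ending at
   [(x + t, x - t)] one thus has [int W^4 = O(t)] and [int (d_a W)^2 = O(t)], and a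
   one-dimensional interpolation argument turns these into [|W|^6 = O(t^2)] at the endpoint,
   i.e. [|u(t, x)| = O(t^(1/3))]. *)

From Stdlib Require Import Reals Lra Lia Psatz.
From Coquelicot Require Import Coquelicot.
Open Scope R_scope.

Lemma continuous_pow {T : UniformSpace} (f : T -> R) n x :
  continuous f x -> continuous (fun x => f x ^ n) x.
Proof.
  intros Hf. induction n as [|n IH]; simpl.
  - apply continuous_const.
  - exact (continuous_mult _ _ _ Hf IH).
Qed.

Section JointContinuity.

Implicit Types f g h : R -> R -> R.

Lemma jointly_continuous_fst : jointly_continuous (fun x _ => x).
Proof. intros x y. apply continuous_fst. Qed.

Lemma jointly_continuous_snd : jointly_continuous (fun _ y => y).
Proof. intros x y. apply continuous_snd. Qed.

Lemma jointly_continuous_const c : jointly_continuous (fun _ _ => c).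
Proof. intros x y. apply continuous_const. Qed.

Lemma jointly_continuous_plus f g :
  jointly_continuous f -> jointly_continuous g ->
  jointly_continuous (fun x y => f x y + g x y).
Proof. intros Hf Hg x y. exact (continuous_plus _ _ _ (Hf x y) (Hg x y)). Qed.

Lemma jointly_continuous_minus f g :
  jointly_continuous f -> jointly_continuous g ->
  jointly_continuous (fun x y => f x y - g x y).
Proof. intros Hf Hg x y. exact (continuous_minus _ _ _ (Hf x y) (Hg x y)). Qed.

Lemma jointly_continuous_opp f :
  jointly_continuous f -> jointly_continuous (fun x y => - f x y).
Proof. intros Hf x y. exact (continuous_opp _ _ (Hf x y)). Qed.

Lemma jointly_continuous_mult f g :
  jointly_continuous f -> jointly_continuous g ->
  jointly_continuous (fun x y => f x y * g x y).
Proof. intros Hf Hg x y. exact (continuous_mult _ _ _ (Hf x y) (Hg x y)). Qed.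

Lemma jointly_continuous_pow f n :
  jointly_continuous f -> jointly_continuous (fun x y => f x y ^ n).
Proof. intros Hf x y. apply continuous_pow, Hf. Qed.

Lemma jointly_continuous_comp h f g :
  jointly_continuous h -> jointly_continuous f -> jointly_continuous g ->
  jointly_continuous (fun x y => h (f x y) (g x y)).
Proof.
  intros Hh Hf Hg x y.
  apply (continuous_comp_2 (fun p : R * R => f (fst p) (snd p))
           (fun p : R * R => g (fst p) (snd p)) h); auto.
Qed.

Lemma jointly_continuous_lift (f : R -> R) :
  (forall x, continuous f x) -> jointly_continuous (fun x _ => f x).
Proof.
  intros Hf x y.
  apply (continuous_comp (fun p : R * R => fst p) f); [apply continuous_fst | apply Hf].
Qed.

Lemma jointly_continuous_l g : jointly_continuous g -> forall x y, continuous (fun x => g x y) x.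
Proof.
  intros Hg x y.
  apply (continuous_comp_2 (fun x => x) (fun _ => y) g);
    [apply continuous_id | apply continuous_const | apply Hg].
Qed.

Lemma jointly_continuous_r g : jointly_continuous g -> forall x y, continuous (g x) y.
Proof.
  intros Hg x y.
  apply (continuous_comp_2 (fun _ => x) (fun y => y) g);
    [apply continuous_const | apply continuous_id | apply Hg].
Qed.

Lemma jointly_continuous_diag g : jointly_continuous g -> forall x, continuous (fun x => g x x) x.
Proof.
  intros Hg x.
  apply (continuous_comp_2 (fun x => x) (fun x => x) g);
    [apply continuous_id | apply continuous_id | apply Hg].
Qed.

Lemma jointly_continuous_2d_pt g : jointly_continuous g -> forall x y, continuity_2d_pt g x y.
Proof. intros Hg x y. apply continuity_2d_pt_filterlim, Hg. Qed.

End JointContinuity.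

Lemma ex_RInt_of_continuous (f : R -> R) a b :
  (forall x, continuous f x) -> ex_RInt f a b.
Proof. intros Hf. apply (ex_RInt_continuous (V := R_CompleteNormedModule)); auto. Qed.

Lemma RInt_of_is_derive (F dF : R -> R) a b :
  (forall x, is_derive F x (dF x)) -> (forall x, continuous dF x) ->
  RInt dF a b = F b - F a.
Proof.
  intros HF HdF. apply is_RInt_unique.
  apply (is_RInt_derive (V := R_CompleteNormedModule)); auto.
Qed.

Lemma RInt_le_const (f : R -> R) a b c :
  a <= b -> (forall x, continuous f x) -> (forall x, a <= x <= b -> f x <= c) ->
  RInt f a b <= (b - a) * c.
Proof.
  intros Hab Hf Hc.
  replace ((b - a) * c) with (RInt (fun _ => c) a b) by (rewrite RInt_const; reflexivity).
  apply RInt_le; auto using ex_RInt_of_continuous, continuous_const.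
  intros x Hx. apply Hc. lra.
Qed.

Lemma RInt_ge_const (f : R -> R) a b c :
  a <= b -> (forall x, continuous f x) -> (forall x, a <= x <= b -> c <= f x) ->
  (b - a) * c <= RInt f a b.
Proof.
  intros Hab Hf Hc.
  replace ((b - a) * c) with (RInt (fun _ => c) a b) by (rewrite RInt_const; reflexivity).
  apply RInt_le; auto using ex_RInt_of_continuous, continuous_const.
  intros x Hx. apply Hc. lra.
Qed.

Lemma RInt_ge_0_continuous (f : R -> R) a b :
  a <= b -> (forall x, continuous f x) -> (forall x, 0 <= f x) -> 0 <= RInt f a b.
Proof. intros Hab Hf Hpos. apply RInt_ge_0; auto using ex_RInt_of_continuous. Qed.

Lemma RInt_le_RInt_subinterval (f : R -> R) a b c d :
  a <= b <= c -> c <= d -> (forall x, continuous f x) -> (forall x, 0 <= f x) ->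
  RInt f b c <= RInt f a d.
Proof.
  intros Habc Hcd Hf Hpos.
  rewrite <- (RInt_Chasles f a b d), <- (RInt_Chasles f b c d);
    auto using ex_RInt_of_continuous.
  assert (0 <= RInt f a b) by (apply RInt_ge_0_continuous; auto; lra).
  assert (0 <= RInt f c d) by (apply RInt_ge_0_continuous; auto; lra).
  change plus with Rplus. lra.
Qed.

Lemma abs_RInt_le_dist (f : R -> R) a b K :
  ex_RInt f a b -> (forall y, Rmin a b <= y <= Rmax a b -> Rabs (f y) <= K) ->
  Rabs (RInt f a b) <= Rabs (b - a) * K.
Proof.
  intros Hex Hb.
  destruct (Rle_or_lt a b) as [Hab|Hab].
  - rewrite (Rabs_right (b - a)) by lra.
    apply abs_RInt_le_const; auto.
    intros y Hy. apply Hb. rewrite Rmin_left, Rmax_right; lra.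
  - rewrite <- opp_RInt_swap by (apply ex_RInt_swap; auto).
    change (Rabs (- RInt f b a) <= Rabs (b - a) * K).
    rewrite Rabs_Ropp, Rabs_minus_sym, (Rabs_right (a - b)) by lra.
    apply abs_RInt_le_const; [lra | apply ex_RInt_swap; auto |].
    intros y Hy. apply Hb. rewrite Rmin_right, Rmax_left; lra.
Qed.

Lemma RInt_comp_opp (f : R -> R) a b :
  (forall x, continuous f x) -> RInt (fun y => f (- y)) a b = RInt f (- b) (- a).
Proof.
  intros Hf. apply is_RInt_unique.
  rewrite <- opp_RInt_swap by auto using ex_RInt_of_continuous.
  apply (is_RInt_ext (fun y => opp (opp (f (- y))))).
  { intros y _. apply opp_opp. }
  apply (is_RInt_opp (V := R_NormedModule)), (is_RInt_comp_opp (V := R_NormedModule)).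
  apply (RInt_correct (V := R_CompleteNormedModule)), ex_RInt_of_continuous, Hf.
Qed.

(* Cauchy-Schwarz against the constant 1: expand 0 <= int (h - mean)^2. *)
Lemma RInt_sqr_le (h : R -> R) a b :
  a <= b -> (forall x, continuous h x) ->
  RInt h a b ^ 2 <= (b - a) * RInt (fun x => h x ^ 2) a b.
Proof.
  intros Hab Hh.
  destruct (Req_dec a b) as [<-|Hne].
  { rewrite !RInt_point. change (@zero R_CompleteNormedModule) with 0. lra. }
  set (c := RInt h a b / (b - a)).
  assert (Hh2 : forall x, continuous (fun x => h x ^ 2) x) by auto using continuous_pow.
  assert (Hexp : is_RInt (fun x => (h x - c) ^ 2) a b
                 (RInt (fun x => h x ^ 2) a b + (-2 * c) * RInt h a b + (b - a) * c ^ 2)).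
  { apply (is_RInt_ext (fun x => h x ^ 2 + (-2 * c) * h x + c ^ 2)).
    { intros x _. simpl. ring. }
    apply (is_RInt_plus (V := R_NormedModule)); [apply (is_RInt_plus (V := R_NormedModule)) |].
    - apply (RInt_correct (V := R_CompleteNormedModule)), ex_RInt_of_continuous; auto.
    - apply (is_RInt_scal (V := R_NormedModule)).
      apply (RInt_correct (V := R_CompleteNormedModule)), ex_RInt_of_continuous; auto.
    - apply (is_RInt_const (V := R_NormedModule)). }
  assert (Hpos : 0 <= RInt (fun x => (h x - c) ^ 2) a b).
  { apply RInt_ge_0_continuous; auto using pow2_ge_0.
    intros x. apply (continuous_pow (fun x => h x - c)).
    apply (continuous_minus h (fun _ => c)); auto using continuous_const. }
  assert (Hba : 0 < b - a) by lra.
  assert (Hc : @eq R (RInt h a b) (c * (b - a))).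
  { unfold c, Rdiv. rewrite Rmult_assoc, Rinv_l, Rmult_1_r; lra. }
  rewrite (is_RInt_unique _ _ _ _ Hexp) in Hpos. rewrite Hc in *. nra.
Qed.

Lemma continuous_bounded_on (f : R -> R) m M :
  m <= M -> (forall x, continuous f x) ->
  exists K, forall x, m <= x <= M -> Rabs (f x) <= K.
Proof.
  intros HmM Hf.
  destruct (continuity_ab_maj (fun x => Rabs (f x)) m M HmM) as [xmax [Hmax _]].
  { intros x _. apply continuity_pt_filterlim.
    apply (continuous_comp f Rabs); [apply Hf | apply continuous_Rabs]. }
  exists (Rabs (f xmax)). exact Hmax.
Qed.

Lemma jointly_continuous_uniform_near g p0 m M :
  jointly_continuous g -> m <= M ->
  exists K, 0 < K /\ forall e : posreal, exists delta : posreal,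
    forall q y, Rabs (q - p0) < delta -> m <= y <= M ->
      Rabs (g q y - g p0 y) < e /\ Rabs (g q y) <= K + e.
Proof.
  intros Hg HmM.
  destruct (continuous_bounded_on (g p0) m M HmM) as [K HK].
  { apply jointly_continuous_r, Hg. }
  exists (Rabs K + 1). split; [generalize (Rabs_pos K); lra |].
  intros e.
  destruct (uniform_continuity_2d_1d' g m M p0) with (eps := e) as [delta Hdelta].
  { intros y _. apply jointly_continuous_2d_pt, Hg. }
  exists delta. intros q y Hq Hy.
  assert (Hclose : Rabs (g q y - g p0 y) < e).
  { apply Rabs_lt_between' in Hq.
    apply Hdelta; try lra.
    rewrite Rminus_diag, Rabs_R0. apply cond_pos. }
  split; [exact Hclose |].
  replace (g q y) with (g p0 y + (g q y - g p0 y)) by ring.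
  eapply Rle_trans; [apply Rabs_triang |].
  generalize (HK y Hy) (Rle_abs K). lra.
Qed.

Lemma abs_RInt_param_diff_le (g : R -> R -> R) q p0 c d c0 d0 m M K e :
  jointly_continuous g ->
  m <= c <= M -> m <= d <= M -> m <= c0 <= M -> m <= d0 <= M ->
  (forall y, m <= y <= M -> Rabs (g q y) <= K) ->
  (forall y, m <= y <= M -> Rabs (g q y - g p0 y) <= e) ->
  Rabs (RInt (g q) c d - RInt (g p0) c0 d0)
    <= (Rabs (c0 - c) + Rabs (d - d0)) * K + Rabs (d0 - c0) * e.
Proof.
  intros Hg Hc Hd Hc0 Hd0 HK He.
  assert (Hex : forall q a b, ex_RInt (g q) a b)
    by (intros; apply ex_RInt_of_continuous, jointly_continuous_r, Hg).
  assert (Hbetween : forall a b y, m <= a <= M -> m <= b <= M ->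
                       Rmin a b <= y <= Rmax a b -> m <= y <= M)
    by (intros a b y; unfold Rmin, Rmax; destruct Rle_dec; lra).
  assert (Hleft : Rabs (RInt (g q) c c0) <= Rabs (c0 - c) * K)
    by (apply abs_RInt_le_dist; eauto).
  assert (Hright : Rabs (RInt (g q) d0 d) <= Rabs (d - d0) * K)
    by (apply abs_RInt_le_dist; eauto).
  assert (Hmid : Rabs (RInt (g q) c0 d0 - RInt (g p0) c0 d0) <= Rabs (d0 - c0) * e).
  { rewrite <- (RInt_minus (V := R_CompleteNormedModule)) by auto.
    apply abs_RInt_le_dist; [apply (ex_RInt_minus (V := R_NormedModule)); auto |].
    intros y Hy. apply He. eauto. }
  rewrite <- (RInt_Chasles (g q) c c0 d), <- (RInt_Chasles (g q) c0 d0 d) by auto.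
  change plus with Rplus.
  replace (RInt (g q) c c0 + (RInt (g q) c0 d0 + RInt (g q) d0 d) - RInt (g p0) c0 d0)
    with (RInt (g q) c c0 + RInt (g q) d0 d + (RInt (g q) c0 d0 - RInt (g p0) c0 d0)) by ring.
  eapply Rle_trans; [apply Rabs_triang |].
  eapply Rle_trans; [apply Rplus_le_compat_r, Rabs_triang |].
  lra.
Qed.

Lemma continuous_RInt_param {T : UniformSpace} (g : R -> R -> R) (p c d : T -> R) z :
  jointly_continuous g -> continuous p z -> continuous c z -> continuous d z ->
  continuous (fun w => RInt (g (p w)) (c w) (d w)) z.
Proof.
  intros Hg Hp Hc Hd.
  set (p0 := p z); set (c0 := c z); set (d0 := d z).
  set (m := Rmin c0 d0 - 1); set (M := Rmax c0 d0 + 1).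
  assert (HmM : m <= M) by (unfold m, M; generalize (Rmin_Rmax c0 d0); lra).
  destruct (jointly_continuous_uniform_near g p0 m M Hg HmM) as [K [HK Hnear]].
  apply filterlim_locally. intros eps.
  set (L := Rabs (d0 - c0)).
  assert (HL : 0 <= L) by apply Rabs_pos.
  assert (Heps : 0 < eps) by apply cond_pos.
  set (e := eps / (4 * (L + 1))).
  assert (He : 0 < e) by (apply Rdiv_lt_0_compat; lra).
  assert (HLe : L * e < eps / 2).
  { unfold e. apply Rmult_lt_reg_r with (4 * (L + 1)); [lra |].
    replace (L * (eps / (4 * (L + 1))) * (4 * (L + 1))) with (L * eps) by (field; lra). nra. }
  destruct (Hnear (mkposreal e He)) as [delta Hdelta]; simpl in Hdelta.
  set (eta := Rmin 1 (eps / (4 * (K + e)))).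
  assert (Heta : 0 < eta) by (apply Rmin_pos; [lra | apply Rdiv_lt_0_compat; lra]).
  assert (Heta1 : eta <= 1) by apply Rmin_l.
  assert (HetaK : 2 * eta * (K + e) <= eps / 2).
  { assert (eta <= eps / (4 * (K + e))) by apply Rmin_r.
    assert ((K + e) * eta <= (K + e) * (eps / (4 * (K + e)))) by (apply Rmult_le_compat_l; lra).
    replace ((K + e) * (eps / (4 * (K + e)))) with (eps / 4) in * by (field; lra). lra. }
  generalize (filter_and _ _ (proj1 (filterlim_locally p p0) Hp delta)
               (filter_and _ _ (proj1 (filterlim_locally c c0) Hc (mkposreal _ Heta))
                               (proj1 (filterlim_locally d d0) Hd (mkposreal _ Heta)))).
  apply filter_imp. intros w [Hpw [Hcw Hdw]].
  change (Rabs (p w - p0) < delta) in Hpw.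
  change (Rabs (c w - c0) < eta) in Hcw.
  change (Rabs (d w - d0) < eta) in Hdw.
  change (Rabs (RInt (g (p w)) (c w) (d w) - RInt (g p0) c0 d0) < eps).
  assert (Hends : m <= c0 <= M /\ m <= d0 <= M /\ m <= c w <= M /\ m <= d w <= M).
  { apply Rabs_lt_between' in Hcw. apply Rabs_lt_between' in Hdw.
    generalize (Rmin_l c0 d0) (Rmin_r c0 d0) (Rmax_l c0 d0) (Rmax_r c0 d0).
    unfold m, M. lra. }
  destruct Hends as (Hc0 & Hd0 & Hcw' & Hdw').
  eapply Rle_lt_trans.
  { apply (abs_RInt_param_diff_le g (p w) p0 (c w) (d w) c0 d0 m M (K + e) e); auto;
      intros y Hy; [apply Hdelta | left; apply Hdelta]; auto. }
  rewrite Rabs_minus_sym in Hcw. fold L.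
  assert ((Rabs (c0 - c w) + Rabs (d w - d0)) * (K + e) <= 2 * eta * (K + e))
    by (apply Rmult_le_compat_r; lra).
  lra.
Qed.

Lemma is_derive_RInt_param_upper (f df : R -> R -> R) a (phi : R -> R) x dphi :
  jointly_continuous f -> jointly_continuous df ->
  (forall x t, is_derive (fun x => f x t) x (df x t)) -> is_derive phi x dphi ->
  is_derive (fun x => RInt (f x) a (phi x)) x (RInt (df x) a (phi x) + f x (phi x) * dphi).
Proof.
  intros Hf Hdf Hder Hphi.
  assert (HD : forall x t, Derive (fun x => f x t) x = df x t)
    by (intros; apply is_derive_unique, Hder).
  assert (HD2 : forall x t, continuity_2d_pt (fun x t => Derive (fun z => f z t) x) x t).
  { intros x' t. apply (continuity_2d_pt_ext df); [intros; symmetry; apply HD |].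
    apply jointly_continuous_2d_pt, Hdf. }
  assert (Hex : forall x c d, ex_RInt (f x) c d)
    by (intros; apply ex_RInt_of_continuous, jointly_continuous_r, Hf).
  assert (H01 : 0 < 1) by lra.
  replace (RInt (df x) a (phi x) + f x (phi x) * dphi)
    with (RInt (fun t => Derive (fun z => f z t) x) a (phi x) + - f x a * 0 + f x (phi x) * dphi).
  - apply (is_derive_RInt_param_bound_comp f (fun _ => a) phi x 0 dphi).
    + apply filter_forall; auto.
    + exists (mkposreal 1 H01). apply filter_forall; auto.
    + exists (mkposreal 1 H01). apply filter_forall; auto.
    + exact (is_derive_const a x).
    + exact Hphi.
    + exists (mkposreal 1 H01). apply filter_forall. intros y t _. eexists. apply Hder.
    + intros t _. apply HD2.
    + exists (mkposreal 1 H01). intros. apply HD2.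
    + exists (mkposreal 1 H01). intros. apply HD2.
    + apply continuity_pt_filterlim, jointly_continuous_r, Hf.
    + apply continuity_pt_filterlim, jointly_continuous_r, Hf.
  - rewrite (RInt_ext _ (df x)) by (intros; apply HD). ring.
Qed.

Lemma is_derive_RInt_upper (g : R -> R) a (phi : R -> R) x dphi :
  (forall t, continuous g t) -> is_derive phi x dphi ->
  is_derive (fun x => RInt g a (phi x)) x (g (phi x) * dphi).
Proof.
  intros Hg Hphi.
  replace (g (phi x) * dphi) with (RInt (fun _ => 0) a (phi x) + g (phi x) * dphi).
  - apply (is_derive_RInt_param_upper (fun _ t => g t) (fun _ _ => 0));
      auto using jointly_continuous_const.
    + apply (jointly_continuous_comp (fun x _ => g x) (fun _ t => t) (fun _ _ => 0)).
      * apply jointly_continuous_lift, Hg.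
      * apply jointly_continuous_snd.
      * apply jointly_continuous_const.
    + intros y t. exact (is_derive_const (g t) y).
  - rewrite RInt_const. change (scal (phi x - a) 0) with ((phi x - a) * 0). ring.
Qed.

Lemma is_derive_Rplus (f g : R -> R) x lf lg :
  is_derive f x lf -> is_derive g x lg -> is_derive (fun x => f x + g x) x (lf + lg).
Proof. exact (is_derive_plus f g x lf lg). Qed.

Lemma is_derive_Rminus (f g : R -> R) x lf lg :
  is_derive f x lf -> is_derive g x lg -> is_derive (fun x => f x - g x) x (lf - lg).
Proof. exact (is_derive_minus f g x lf lg). Qed.

Lemma is_derive_Rscal (f : R -> R) k x l :
  is_derive f x l -> is_derive (fun x => k * f x) x (k * l).
Proof. exact (is_derive_scal f x k l). Qed.

Lemma sqr_increment_le (g dg : R -> R) x y :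
  x <= y -> (forall z, is_derive g z (dg z)) -> (forall z, continuous dg z) ->
  (g y - g x) ^ 2 <= (y - x) * RInt (fun z => dg z ^ 2) x y.
Proof. intros Hxy Hg Hdg. rewrite <- (RInt_of_is_derive g dg); auto using RInt_sqr_le. Qed.

Lemma sqr_ge_of_sqr_dist_le a y : (a - y) ^ 2 <= a ^ 2 / 4 -> a ^ 2 / 4 <= y ^ 2.
Proof. intros H. destruct (Rle_or_lt 0 a); nra. Qed.

(* If [4 r D <= g(A)^2] then [|g| >= |g(A)|/2] on [[A - r, A]] by Cauchy-Schwarz, so
   [F >= r g(A)^4 / 16]; take [r = min (A - B) (g(A)^2 / (4 D))]. *)
Lemma endpoint_pow_bound (g dg : R -> R) B A F D :
  B < A -> (forall x, is_derive g x (dg x)) -> (forall x, continuous dg x) ->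
  RInt (fun x => g x ^ 4) B A <= F -> RInt (fun x => dg x ^ 2) B A <= D ->
  (A - B) * g A ^ 4 <= 16 * F \/ g A ^ 6 <= 64 * F * D.
Proof.
  intros HBA Hg Hdg HF HD.
  assert (Hgc : forall x, continuous g x)
    by (intros x; apply (ex_derive_continuous (V := R_NormedModule)); eexists; apply Hg).
  assert (Hg4 : forall x, continuous (fun x => g x ^ 4) x) by auto using continuous_pow.
  assert (Hdg2 : forall x, continuous (fun x => dg x ^ 2) x) by auto using continuous_pow.
  set (a := g A).
  assert (key : forall r, 0 <= r <= A - B -> 4 * r * D <= a ^ 2 -> r * a ^ 4 <= 16 * F).
  { intros r Hr HrD.
    assert (Hlow : forall x, A - r <= x <= A -> a ^ 4 / 16 <= g x ^ 4).
    { intros x Hx.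
      assert (HI0 : 0 <= RInt (fun z => dg z ^ 2) x A)
        by (apply RInt_ge_0_continuous; auto using pow2_ge_0; lra).
      assert (HI : RInt (fun z => dg z ^ 2) x A <= D).
      { eapply Rle_trans; [apply RInt_le_RInt_subinterval | exact HD]; auto using pow2_ge_0; lra. }
      assert (Hinc := sqr_increment_le g dg x A (proj2 Hx) Hg Hdg).
      assert (Hsq : a ^ 2 / 4 <= g x ^ 2) by (apply sqr_ge_of_sqr_dist_le; fold a in Hinc; nra).
      replace (a ^ 4 / 16) with ((a ^ 2 / 4) ^ 2) by field.
      replace (g x ^ 4) with ((g x ^ 2) ^ 2) by ring.
      apply pow_incr. split; [nra | exact Hsq]. }
    assert (Hint : r * (a ^ 4 / 16) <= RInt (fun x => g x ^ 4) B A).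
    { eapply Rle_trans; [| apply (RInt_le_RInt_subinterval _ B (A - r) A A)];
        try lra; auto.
      - replace r with (A - (A - r)) at 1 by ring. apply RInt_ge_const; auto; lra.
      - intros x. replace (g x ^ 4) with ((g x ^ 2) ^ 2) by ring. apply pow2_ge_0. }
    lra. }
  assert (HD0 : 0 <= D).
  { eapply Rle_trans; [| exact HD]. apply RInt_ge_0_continuous; auto using pow2_ge_0; lra. }
  destruct (Rle_or_lt (4 * (A - B) * D) (a ^ 2)) as [Hsmall | Hlarge].
  - left. apply key; lra.
  - right.
    assert (HDpos : 0 < D) by (assert (0 <= a ^ 2) by apply pow2_ge_0; nra).
    assert (Hr := key (a ^ 2 / (4 * D))).
    assert (0 <= a ^ 2 / (4 * D)) by (apply Rdiv_le_0_compat; [apply pow2_ge_0 | lra]).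
    assert (a ^ 2 / (4 * D) <= A - B).
    { apply Rmult_le_reg_r with (4 * D); [lra |].
      replace (a ^ 2 / (4 * D) * (4 * D)) with (a ^ 2) by (field; lra). lra. }
    assert (Hrr : a ^ 2 / (4 * D) * a ^ 4 <= 16 * F).
    { apply Hr; [lra |]. right. field. lra. }
    replace (a ^ 6) with (a ^ 2 / (4 * D) * a ^ 4 * (4 * D)) by (field; lra).
    replace (64 * F * D) with (16 * F * (4 * D)) by ring.
    apply Rmult_le_compat_r; lra.
Qed.

Lemma le_mul_of_pow_le V K T n :
  (0 < n)%nat -> 0 <= V -> 0 <= K -> 1 <= T -> V ^ n <= K * T ^ n -> V <= (K + 1) * T.
Proof.
  intros Hn HV HK HT HVn.
  destruct (Rle_or_lt V ((K + 1) * T)) as [Hle | Hlt]; [exact Hle | exfalso].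
  assert (Hpow : ((K + 1) * T) ^ n <= V ^ n) by (apply pow_incr; nra).
  rewrite Rpow_mult_distr in Hpow.
  assert (HK1 : K + 1 <= (K + 1) ^ n).
  { rewrite <- (pow_1 (K + 1)) at 1. apply Rle_pow; [lra | lia]. }
  assert (HTn : 1 <= T ^ n) by (apply pow_R1_Rle; lra).
  nra.
Qed.

Lemma cube_root_bound y t E :
  1 <= t -> 0 <= E -> y ^ 4 <= 32 * E \/ y ^ 6 <= 128 * E ^ 2 * t ^ 2 ->
  Rabs y <= (128 * E ^ 2 + 32 * E + 1) * Rpower t (1 / 3).
Proof.
  intros Ht HE Hcases.
  set (T := Rpower t (1 / 3)).
  assert (HT1 : 1 <= T).
  { unfold T. rewrite <- (Rpower_O t) at 1 by lra. apply Rle_Rpower; lra. }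
  assert (HT3 : T ^ 3 = t).
  { unfold T. rewrite <- Rpower_pow, Rpower_mult by apply exp_pos.
    replace (1 / 3 * INR 3) with 1 by (simpl; field). apply Rpower_1; lra. }
  assert (Heven : forall n, Rabs y ^ (2 * n) = y ^ (2 * n))
    by (intros n; rewrite !pow_mult, pow2_abs; reflexivity).
  assert (E4 : Rabs y ^ 4 = y ^ 4) by exact (Heven 2%nat).
  assert (E6 : Rabs y ^ 6 = y ^ 6) by exact (Heven 3%nat).
  assert (HE2 : 0 <= E ^ 2) by apply pow2_ge_0.
  assert (HV : 0 <= Rabs y) by apply Rabs_pos.
  destruct Hcases as [H4 | H6].
  - assert (Hb : Rabs y <= (32 * E + 1) * T).
    { apply (le_mul_of_pow_le _ (32 * E) T 4); try lia; try lra.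
      assert (1 <= T ^ 4) by (apply pow_R1_Rle; lra).
      rewrite E4. nra. }
    nra.
  - assert (Hb : Rabs y <= (128 * E ^ 2 + 1) * T).
    { apply (le_mul_of_pow_le _ (128 * E ^ 2) T 6); try lia; try lra.
      replace (T ^ 6) with (t ^ 2) by (rewrite <- HT3; ring).
      rewrite E6. exact H6. }
    nra.
Qed.

Section FluxIdentity.

Variables w p : R -> R -> R.
Hypothesis Hw : jointly_continuous w.
Hypothesis Hp : jointly_continuous p.
Hypothesis Hwx : forall x y, is_derive (fun x => w x y) x (p x y / 2).
Hypothesis Hpy : forall x y, is_derive (p x) y (w x y ^ 3 / 2).

Let Hdensity : jointly_continuous (fun x y => 2 * w x y ^ 3 * p x y).
Proof.
  apply jointly_continuous_mult; [| exact Hp].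
  apply (jointly_continuous_mult (fun _ _ => 2)); [apply jointly_continuous_const |].
  apply jointly_continuous_pow, Hw.
Qed.

Lemma is_derive_RInt_edge_pow4 b0 x :
  is_derive (fun x => RInt (fun y => w x y ^ 4) b0 x) x (2 * (p x x ^ 2 - p x b0 ^ 2) + w x x ^ 4).
Proof.
  assert (Hint : RInt (fun y => 2 * w x y ^ 3 * p x y) b0 x = 2 * (p x x ^ 2 - p x b0 ^ 2)).
  { rewrite (RInt_of_is_derive (fun y => 2 * p x y ^ 2)).
    - simpl. ring.
    - intros y. replace (2 * w x y ^ 3 * p x y) with (2 * (INR 2 * (w x y ^ 3 / 2) * p x y ^ 1))
        by (simpl; field).
      apply is_derive_Rscal, is_derive_pow, Hpy.
    - intros y. apply (jointly_continuous_r (fun x y => 2 * w x y ^ 3 * p x y)), Hdensity. }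
  rewrite <- Hint, <- (Rmult_1_r (w x x ^ 4)).
  apply (is_derive_RInt_param_upper (fun x y => w x y ^ 4) (fun x y => 2 * w x y ^ 3 * p x y)
           b0 (fun x => x)).
  - apply jointly_continuous_pow, Hw.
  - exact Hdensity.
  - intros x' y. replace (2 * w x' y ^ 3 * p x' y) with (INR 4 * (p x' y / 2) * w x' y ^ 3)
      by (simpl; field).
    apply (is_derive_pow (fun x => w x y)), Hwx.
  - exact (is_derive_id (K := R_AbsRing) x).
Qed.

(* Stokes' theorem for the closed form [p^2 da + w^4/2 db] on the triangle with vertices
   [(b0, b0)], [(a, b0)], [(a, a)]. *)
Lemma flux_identity b0 a :
  RInt (fun x => p x b0 ^ 2) b0 a + / 2 * RInt (fun y => w a y ^ 4) b0 a
  = RInt (fun x => p x x ^ 2 + / 2 * w x x ^ 4) b0 a.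
Proof.
  assert (Hdiag : jointly_continuous (fun x y => p x y ^ 2 + / 2 * w x y ^ 4)).
  { apply jointly_continuous_plus; [apply jointly_continuous_pow, Hp |].
    apply (jointly_continuous_mult (fun _ _ => / 2));
      [apply jointly_continuous_const | apply jointly_continuous_pow, Hw]. }
  set (F := fun x => RInt (fun x => p x b0 ^ 2) b0 x + / 2 * RInt (fun y => w x y ^ 4) b0 x
                     - RInt (fun x => p x x ^ 2 + / 2 * w x x ^ 4) b0 x).
  assert (HF : forall x, is_derive F x 0).
  { intros x. unfold F.
    replace 0 with (p x b0 ^ 2 * 1 + / 2 * (2 * (p x x ^ 2 - p x b0 ^ 2) + w x x ^ 4)
                    - (p x x ^ 2 + / 2 * w x x ^ 4) * 1) by field.
    apply is_derive_Rminus; [apply is_derive_Rplus |].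
    - apply (is_derive_RInt_upper (fun x => p x b0 ^ 2) b0 (fun x => x));
        [| exact (is_derive_id (K := R_AbsRing) x)].
      intros y. apply (jointly_continuous_l (fun x y => p x y ^ 2)), jointly_continuous_pow, Hp.
    - apply is_derive_Rscal, is_derive_RInt_edge_pow4.
    - apply (is_derive_RInt_upper (fun x => p x x ^ 2 + / 2 * w x x ^ 4) b0 (fun x => x));
        [| exact (is_derive_id (K := R_AbsRing) x)].
      intros y. apply (jointly_continuous_diag (fun x y => p x y ^ 2 + / 2 * w x y ^ 4)), Hdiag. }
  assert (Hconst : F a = F b0).
  { apply Rminus_diag_uniq. rewrite <- (RInt_of_is_derive F (fun _ => 0) b0 a HF)
      by (intros; apply continuous_const).
    rewrite RInt_const. apply Rmult_0_r. }
  unfold F in Hconst. rewrite !RInt_point in Hconst.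
  change (@zero R_CompleteNormedModule) with 0 in Hconst. lra.
Qed.

End FluxIdentity.

Definition Wnull (u : R -> R -> R) a b : R := u ((a - b) / 2) ((a + b) / 2).

(* [Pnull = 2 d_a Wnull = (d_t + d_x) u], written out with the Duhamel formula. *)
Definition Pnull (u0 u1 : R -> R) (u : R -> R -> R) a b : R :=
  Derive u0 a + u1 a - RInt (fun s => u s (a - s) ^ 3) 0 ((a - b) / 2).

Lemma Pnull_diag u0 u1 u a : Pnull u0 u1 u a a = Derive u0 a + u1 a.
Proof.
  unfold Pnull. replace ((a - a) / 2) with 0 by field.
  rewrite RInt_point. change (@zero R_CompleteNormedModule) with 0. ring.
Qed.

Lemma jointly_continuous_half_diff : jointly_continuous (fun x y => (x - y) / 2).
Proof.
  apply (jointly_continuous_mult (fun x y => x - y) (fun _ _ => / 2)).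
  - apply jointly_continuous_minus; [apply jointly_continuous_fst | apply jointly_continuous_snd].
  - apply jointly_continuous_const.
Qed.

Lemma jointly_continuous_half_sum : jointly_continuous (fun x y => (x + y) / 2).
Proof.
  apply (jointly_continuous_mult (fun x y => x + y) (fun _ _ => / 2)).
  - apply jointly_continuous_plus; [apply jointly_continuous_fst | apply jointly_continuous_snd].
  - apply jointly_continuous_const.
Qed.

Section Solution.

Variables (u0 u1 : R -> R) (u : R -> R -> R).
Hypothesis Hu0 : is_C1 u0.
Hypothesis Hu1 : forall x, continuous u1 x.
Hypothesis Hsol : is_solution_NLW3 u0 u1 u.

Let Hu : jointly_continuous u := proj1 Hsol.

Lemma jointly_continuous_cube : jointly_continuous (fun s y => u s y ^ 3).
Proof. apply jointly_continuous_pow, Hu. Qed.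

Lemma jointly_continuous_cube_shift : jointly_continuous (fun x s => u s (x - s) ^ 3).
Proof.
  apply (jointly_continuous_comp (fun s y => u s y ^ 3) (fun _ s => s) (fun x s => x - s)).
  - exact jointly_continuous_cube.
  - apply jointly_continuous_snd.
  - apply jointly_continuous_minus; [apply jointly_continuous_fst | apply jointly_continuous_snd].
Qed.

Lemma Wnull_duhamel a b :
  Wnull u a b = (u0 a + u0 b) / 2 + / 2 * RInt u1 b a
    - / 2 * RInt (fun s => RInt (fun y => u s y ^ 3) (b + s) (a - s)) 0 ((a - b) / 2).
Proof.
  unfold Wnull. rewrite (proj2 Hsol).
  replace ((a + b) / 2 + (a - b) / 2) with a by field.
  replace ((a + b) / 2 - (a - b) / 2) with b by field.
  do 2 f_equal. apply RInt_ext. intros s _.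
  replace ((a + b) / 2 - ((a - b) / 2 - s)) with (b + s) by field.
  replace ((a + b) / 2 + ((a - b) / 2 - s)) with (a - s) by field.
  reflexivity.
Qed.

Lemma Wnull_diag a : Wnull u a a = u0 a.
Proof.
  rewrite Wnull_duhamel. replace ((a - a) / 2) with 0 by field.
  rewrite !RInt_point. change (@zero R_CompleteNormedModule) with 0. field.
Qed.

Lemma jointly_continuous_Wnull : jointly_continuous (Wnull u).
Proof.
  apply (jointly_continuous_comp u (fun a b => (a - b) / 2) (fun a b => (a + b) / 2));
    auto using jointly_continuous_half_diff, jointly_continuous_half_sum.
Qed.

Lemma jointly_continuous_Pnull : jointly_continuous (Pnull u0 u1 u).
Proof.
  apply (jointly_continuous_minus (fun a _ => Derive u0 a + u1 a)).
  - apply (jointly_continuous_lift (fun a => Derive u0 a + u1 a)).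
    intros x. apply (continuous_plus (Derive u0) u1); [apply Hu0 | apply Hu1].
  - intros a b.
    apply (@continuous_RInt_param _ (fun x s => u s (x - s) ^ 3) (fun w : R * R => fst w)
             (fun _ => 0) (fun w : R * R => (fst w - snd w) / 2)).
    + exact jointly_continuous_cube_shift.
    + exact (jointly_continuous_fst a b).
    + apply continuous_const.
    + exact (jointly_continuous_half_diff a b).
Qed.

Lemma is_derive_duhamel_l a b :
  is_derive (fun a => RInt (fun s => RInt (fun y => u s y ^ 3) (b + s) (a - s)) 0 ((a - b) / 2)) a
    (RInt (fun s => u s (a - s) ^ 3) 0 ((a - b) / 2)).
Proof.
  set (f := fun a s => RInt (fun y => u s y ^ 3) (b + s) (a - s)).
  assert (Hf0 : f a ((a - b) / 2) = 0).
  { unfold f. replace (a - (a - b) / 2) with (b + (a - b) / 2) by field.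
    exact (RInt_point (V := R_CompleteNormedModule) _ _). }
  replace (RInt (fun s => u s (a - s) ^ 3) 0 ((a - b) / 2))
    with (RInt (fun s => u s (a - s) ^ 3) 0 ((a - b) / 2) + f a ((a - b) / 2) * / 2)
    by (rewrite Hf0; ring).
  apply (is_derive_RInt_param_upper f (fun x s => u s (x - s) ^ 3) 0 (fun a => (a - b) / 2)).
  - intros x s.
    apply (@continuous_RInt_param _ (fun s y => u s y ^ 3) (fun w : R * R => snd w)
             (fun w : R * R => b + snd w) (fun w : R * R => fst w - snd w)).
    + exact jointly_continuous_cube.
    + exact (jointly_continuous_snd x s).
    + exact (jointly_continuous_plus _ _ (jointly_continuous_const b) jointly_continuous_snd x s).
    + exact (jointly_continuous_minus _ _ jointly_continuous_fst jointly_continuous_snd x s).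
  - exact jointly_continuous_cube_shift.
  - intros x s. unfold f.
    replace (u s (x - s) ^ 3) with (u s (x - s) ^ 3 * 1) by ring.
    apply (is_derive_RInt_upper (fun y => u s y ^ 3) (b + s) (fun x => x - s)).
    + intros y. apply (jointly_continuous_r (fun s y => u s y ^ 3)), jointly_continuous_cube.
    + auto_derive; auto.
  - auto_derive; auto. field.
Qed.

Lemma is_derive_Wnull_l a b : is_derive (fun a => Wnull u a b) a (Pnull u0 u1 u a b / 2).
Proof.
  apply is_derive_ext with (fun a => / 2 * u0 a + / 2 * u0 b + / 2 * RInt u1 b a
    - / 2 * RInt (fun s => RInt (fun y => u s y ^ 3) (b + s) (a - s)) 0 ((a - b) / 2)).
  { intros a'. rewrite Wnull_duhamel. simpl. field. }
  replace (Pnull u0 u1 u a b / 2) with (/ 2 * Derive u0 a + / 2 * 0 + / 2 * (u1 a * 1)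
    - / 2 * RInt (fun s => u s (a - s) ^ 3) 0 ((a - b) / 2)) by (unfold Pnull; field).
  apply is_derive_Rminus; [apply is_derive_Rplus; [apply is_derive_Rplus |] |];
    apply is_derive_Rscal.
  - apply Derive_correct, Hu0.
  - exact (is_derive_const (u0 b) a).
  - apply (is_derive_RInt_upper u1 b (fun a => a));
      [exact Hu1 | exact (is_derive_id (K := R_AbsRing) a)].
  - apply is_derive_duhamel_l.
Qed.

Lemma is_derive_Pnull_r a b : is_derive (Pnull u0 u1 u a) b (Wnull u a b ^ 3 / 2).
Proof.
  unfold Pnull.
  replace (Wnull u a b ^ 3 / 2)
    with (0 - u ((a - b) / 2) (a - (a - b) / 2) ^ 3 * (- / 2)).
  - apply is_derive_Rminus; [exact (is_derive_const (Derive u0 a + u1 a) b) |].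
    apply (is_derive_RInt_upper (fun s => u s (a - s) ^ 3) 0 (fun b => (a - b) / 2)).
    + intros s. apply (jointly_continuous_r (fun x s => u s (x - s) ^ 3)).
      exact jointly_continuous_cube_shift.
    + auto_derive; auto. field.
  - unfold Wnull. replace (a - (a - b) / 2) with ((a + b) / 2) by field. field.
Qed.

End Solution.

Lemma is_derive_reflect (f : R -> R) x l :
  is_derive f (- x) l -> is_derive (fun x => f (- x)) x (- l).
Proof.
  intros Hf. replace (- l) with (scal (-1) l) by (unfold scal; simpl; unfold mult; simpl; ring).
  apply (is_derive_comp f (fun x => - x)); [exact Hf |].
  apply (is_derive_opp (K := R_AbsRing) (fun x => x)), (is_derive_id (K := R_AbsRing)).
Qed.

Lemma is_C1_reflect u0 : is_C1 u0 ->
  is_C1 (fun x => u0 (- x)) /\ forall x, Derive (fun x => u0 (- x)) x = - Derive u0 (- x).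
Proof.
  intros Hu0.
  assert (HD : forall x, Derive (fun x => u0 (- x)) x = - Derive u0 (- x)).
  { intros x. apply is_derive_unique, is_derive_reflect, Derive_correct, Hu0. }
  split; [| exact HD].
  intros x. split.
  - eexists. apply is_derive_reflect, Derive_correct, Hu0.
  - apply (continuous_ext (fun x => - Derive u0 (- x))); [intros; symmetry; apply HD |].
    apply (continuous_opp (fun x => Derive u0 (- x))).
    apply (continuous_comp (fun x => - x) (Derive u0)); [| apply Hu0].
    exact (continuous_opp (fun x : R => x) x (continuous_id x)).
Qed.

Lemma is_solution_reflect u0 u1 u :
  (forall x, continuous u1 x) -> is_solution_NLW3 u0 u1 u ->
  is_solution_NLW3 (fun x => u0 (- x)) (fun x => u1 (- x)) (fun t x => u t (- x)).
Proof.
  intros Hu1 [Hu Hduh]. split.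
  - apply (jointly_continuous_comp u (fun t _ => t) (fun _ x => - x)); [exact Hu | |].
    + apply jointly_continuous_fst.
    + apply jointly_continuous_opp, jointly_continuous_snd.
  - intros t x. rewrite Hduh.
    rewrite (RInt_comp_opp u1) by exact Hu1.
    replace (- (x + t)) with (- x - t) by ring.
    replace (- (x - t)) with (- x + t) by ring.
    rewrite (RInt_ext (fun s => RInt (fun y => u s (- y) ^ 3) (x - (t - s)) (x + (t - s)))
                      (fun s => RInt (fun y => u s y ^ 3) (- x - (t - s)) (- x + (t - s)))).
    + lra.
    + intros s _. rewrite (RInt_comp_opp (fun y => u s y ^ 3)).
      * f_equal; ring.
      * intros y. apply (jointly_continuous_r (fun s y => u s y ^ 3)), jointly_continuous_pow, Hu.
Qed.

Lemma Wnull_reflect u a b : Wnull (fun t x => u t (- x)) a b = Wnull u (- b) (- a).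
Proof. unfold Wnull. f_equal; field. Qed.

Lemma characteristic_edge_bounds u0 u1 u E B A :
  is_C1 u0 -> (forall x, continuous u1 x) -> is_solution_NLW3 u0 u1 u ->
  (forall a, (Derive u0 a + u1 a) ^ 2 + / 2 * u0 a ^ 4 <= E) -> B <= A ->
  RInt (fun a => (Pnull u0 u1 u a B / 2) ^ 2) B A <= (A - B) * E / 4 /\
  RInt (fun b => Wnull u A b ^ 4) B A <= 2 * (A - B) * E.
Proof.
  intros Hu0 Hu1 Hsol HE HBA.
  assert (HW := jointly_continuous_Wnull u0 u1 u Hsol).
  assert (HP := jointly_continuous_Pnull u0 u1 u Hu0 Hu1 Hsol).
  assert (Hid := flux_identity (Wnull u) (Pnull u0 u1 u) HW HP
                   (is_derive_Wnull_l u0 u1 u Hu0 Hu1 Hsol) (is_derive_Pnull_r u0 u1 u Hsol) B A).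
  assert (Hdiag : RInt (fun x => Pnull u0 u1 u x x ^ 2 + / 2 * Wnull u x x ^ 4) B A <= (A - B) * E).
  { apply RInt_le_const; [exact HBA | |].
    - apply (jointly_continuous_diag (fun x y => Pnull u0 u1 u x y ^ 2 + / 2 * Wnull u x y ^ 4)).
      apply jointly_continuous_plus; [apply jointly_continuous_pow, HP |].
      apply (jointly_continuous_mult (fun _ _ => / 2));
        [apply jointly_continuous_const | apply jointly_continuous_pow, HW].
    - intros x _. rewrite Pnull_diag, (Wnull_diag u0 u1 u Hsol). apply HE. }
  assert (HP0 : 0 <= RInt (fun a => Pnull u0 u1 u a B ^ 2) B A).
  { apply RInt_ge_0_continuous; auto using pow2_ge_0.
    intros a. apply (jointly_continuous_l (fun x y => Pnull u0 u1 u x y ^ 2)).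
    apply jointly_continuous_pow, HP. }
  assert (HW0 : 0 <= RInt (fun b => Wnull u A b ^ 4) B A).
  { apply RInt_ge_0_continuous; [exact HBA | |].
    - intros b. apply (jointly_continuous_r (fun x y => Wnull u x y ^ 4)).
      apply jointly_continuous_pow, HW.
    - intros b. replace (Wnull u A b ^ 4) with ((Wnull u A b ^ 2) ^ 2) by ring. apply pow2_ge_0. }
  assert (Hscale : RInt (fun a => (Pnull u0 u1 u a B / 2) ^ 2) B A
                   = / 4 * RInt (fun a => Pnull u0 u1 u a B ^ 2) B A).
  { rewrite <- (RInt_scal (V := R_CompleteNormedModule)).
    - apply RInt_ext. intros a _. unfold scal; simpl; unfold mult; simpl. field.
    - apply ex_RInt_of_continuous. intros a.
      apply (jointly_continuous_l (fun x y => Pnull u0 u1 u x y ^ 2)), jointly_continuous_pow, HP. }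
  rewrite Hscale. split; lra.
Qed.

(* The mirror image [x |-> -x] exchanges the two families of characteristics: the edge
   [b = B] for [u] is the edge [a = -B] for the mirror solution. *)
Lemma Wnull_edge_L4_bound u0 u1 u E B A :
  is_C1 u0 -> (forall x, continuous u1 x) -> is_solution_NLW3 u0 u1 u ->
  (forall a, (- Derive u0 a + u1 a) ^ 2 + / 2 * u0 a ^ 4 <= E) -> B <= A ->
  RInt (fun a => Wnull u a B ^ 4) B A <= 2 * (A - B) * E.
Proof.
  intros Hu0 Hu1 Hsol HE HBA.
  destruct (is_C1_reflect u0 Hu0) as [Hv0 HDv0].
  assert (Hv1 : forall x, continuous (fun x => u1 (- x)) x).
  { intros x. apply (continuous_comp (fun x => - x) u1); [| apply Hu1].
    exact (continuous_opp (fun x : R => x) x (continuous_id x)). }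
  assert (Hv := is_solution_reflect u0 u1 u Hu1 Hsol).
  destruct (characteristic_edge_bounds _ _ _ E (- A) (- B) Hv0 Hv1 Hv) as [_ HW]; [| lra |].
  { intros a. rewrite HDv0. apply HE. }
  replace (- B - - A) with (A - B) in HW by ring.
  rewrite <- (RInt_comp_opp (fun b => Wnull (fun t x => u t (- x)) (- B) b ^ 4)) in HW.
  - rewrite (RInt_ext _ (fun a => Wnull u a B ^ 4)) in HW; [exact HW |].
    intros a _. rewrite Wnull_reflect, !Ropp_involutive. reflexivity.
  - intros b. apply (jointly_continuous_r (fun x y => Wnull (fun t x => u t (- x)) x y ^ 4)).
    apply jointly_continuous_pow, (jointly_continuous_Wnull _ _ _ Hv).
Qed.

Lemma data_energy_le M d v w :
  Rabs d <= M -> Rabs v <= M -> Rabs w <= M -> (d + v) ^ 2 + / 2 * w ^ 4 <= 4 * M ^ 2 + M ^ 4 / 2.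
Proof.
  intros Hd Hv Hw.
  assert (Hdv : (d + v) ^ 2 <= (2 * M) ^ 2).
  { apply pow_maj_Rabs. eapply Rle_trans; [apply Rabs_triang | lra]. }
  assert (Hw4 : w ^ 4 <= M ^ 4) by (apply pow_maj_Rabs, Hw).
  lra.
Qed.

Theorem proposition1 :
  forall M : R, exists C : R,
  forall (u0 u1 : R -> R) (u : R -> R -> R),
    is_C1 u0 ->
    (forall x, continuous u1 x) ->
    (forall x, Rabs (u0 x) <= M) ->
    (forall x, Rabs (Derive u0 x) <= M) ->
    (forall x, Rabs (u1 x) <= M) ->
    is_solution_NLW3 u0 u1 u ->
    forall t x, 1 <= t -> Rabs (u t x) <= C * Rpower t (1 / 3).
Proof.
  intros M.
  set (E := 4 * M ^ 2 + M ^ 4 / 2).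
  exists (128 * E ^ 2 + 32 * E + 1).
  intros u0 u1 u Hu0 Hu1 Hb0 Hbd Hb1 Hsol t x Ht.
  assert (HE : 0 <= E) by (unfold E; assert (0 <= (M ^ 2) ^ 2) by apply pow2_ge_0;
                           assert (0 <= M ^ 2) by apply pow2_ge_0; nra).
  set (A := x + t); set (B := x - t).
  assert (HAB : A - B = 2 * t) by (unfold A, B; ring).
  destruct (characteristic_edge_bounds u0 u1 u E B A Hu0 Hu1 Hsol) as [HP _]; [| lra |].
  { intros a. apply data_energy_le; auto. }
  assert (HW : RInt (fun a => Wnull u a B ^ 4) B A <= 2 * (A - B) * E).
  { apply (Wnull_edge_L4_bound u0 u1 u); auto; [| lra].
    intros a. apply data_energy_le; rewrite ?Rabs_Ropp; auto. }
  assert (HuAB : Wnull u A B = u t x)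
    by (unfold Wnull, A, B; f_equal; field).
  apply (cube_root_bound (u t x) t E Ht HE). rewrite <- HuAB.
  destruct (endpoint_pow_bound (fun a => Wnull u a B) (fun a => Pnull u0 u1 u a B / 2) B A
              (2 * (A - B) * E) ((A - B) * E / 4)) as [H4 | H6]; auto; try lra.
  - intros a. apply (is_derive_Wnull_l u0 u1 u); auto.
  - intros a. apply (continuous_mult (fun a => Pnull u0 u1 u a B) (fun _ => / 2));
      [apply (jointly_continuous_l (Pnull u0 u1 u)), jointly_continuous_Pnull; auto |
       apply continuous_const].
  - left. rewrite HAB in H4. nra.
  - right. rewrite HAB in H6. nra.
Qed.
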